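(* Let $F$ be a field containing $\mathcal K$ and let $w_1,\dots,w_N:\mathbb C\to F$ satisfy $L_j(u)w_m(u)=0$ for all $1\le m\le j\le N$ and all $u$, and assume the Casorati determinants $[0,1,\dots,j-1]$ are nonzero for all $1\le j\le N$ and all $u$. Define, for $1\le m\le N$, \[ \tilde x_m(u)=\frac{[0,\dots,m-1]\,[2,\dots,m]}{[1,\dots,m]\,[1,\dots,m-1]} \] (where $[2,\dots,m]$ and $[1,\dots,m-1]$ are $(m-1)\times(m-1)$ determinants, equal to $1$ when $m=1$). Then $\tilde x_m(u)=x_m(u)$ for all $1\le m\le N$ and all $u$.
   Context: Fix an integer $n\ge 2$ and put $N=2n+2$. Let $Q_a(u)$ ($1\le a\le n$, $u\in\mathbb C$) be algebraically independent commuting indeterminates, $\mathcal K$ the field of fractions of $\mathbb Z[Q_a(u)^{\pm1}]$. Put $d_a=1+\delta_{an}$, $Y_a(u)=Q_a(u-\frac{d_a}{2})/Q_a(u+\frac{d_a}{2})$ for $1\le a\le n$, $Y_0(u)=1$. For $1\le a\le n$ set $z_a(u)=\frac{Y_a(u+\frac a2)}{Y_{a-1}(u+\frac{a+1}2)}$, $z_{\bar a}(u)=\frac{Y_{a-1}(u+\frac{2n-a+3}2)}{Y_a(u+\frac{2n-a+4}2)}$; set $x_a(u)=z_a(u)$, $x_{2n+3-a}(u)=z_{\bar a}(u)$ for $1\le a\le n$, and $x_{n+1}(u)=-x_{n+2}(u)=\frac{Q_n(u+\frac n2)Q_n(u+\frac{n+4}2)}{Q_n(u+\frac{n+2}2)^2}$.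 $D$ is the shift operator ($D\,c(u)=c(u+1)D$), acting on $w:\mathbb C\to F$ by $(\sum_jc_jD^j)w(u)=\sum_jc_j(u)w(u+j)$. Let $\epsilon_i=1$ for $i\notin\{n+1,n+2\}$ and $\epsilon_{n+1}=\epsilon_{n+2}=-1$, and for $1\le j\le N$ define $L_j(u)=\prod_{i=N+1-j}^{N}\bigl(D-\epsilon_ix_i(u+n+1-i)\bigr)$, factors ordered by increasing $i$ from left to right. (Then $L_N(u)$ equals $L(u)=\prod_{i=1}^N(x_i(u+n+1-i)-D)$.) Casorati determinants: for integers $i_1,\dots,i_m$, $[i_1,\dots,i_m]$ is the function $u\mapsto\det(w_r(u+i_s))_{1\le r,s\le m}$, using $w_1,\dots,w_m$. *)

From HB Require Import structures.
From mathcomp Require Import all_boot all_order all_algebra.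
From mathcomp Require Import complex Rstruct.
From mathcomp Require Import mpoly.
Set Implicit Arguments. Unset Strict Implicit. Unset Printing Implicit Defensive.
Import GRing.Theory Num.Theory.
Local Open Scope ring_scope.

Definition CC : Type := complex Rdefinitions.R.

Definition hs (u : CC) (k : int) : CC := u + k%:~R / 2.
Definition ish (u : CC) (k : int) : CC := u + k%:~R.

Section Defs.
Variable F : fieldType.
Variable n : nat.
(* Q a u, meaningful for 1 <= a <= n *)
Variable Q : nat -> CC -> F.

Definition NN : nat := 2 * n + 2.

Definition alg_indep : Prop :=
  forall (k : nat) (idx : 'I_k -> nat * CC),
    injective idx ->
    (forall i, 1 <= (idx i).1 <= n)%N ->
    forall p : {mpoly int[k]}, p != 0 ->
      (map_mpoly intr p).@[fun i => Q (idx i).1 (idx i).2] != 0.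

Definition dd (a : nat) : int := (1 + (a == n))%N%:Z.

Definition Y (a : nat) (u : CC) : F :=
  if a == 0%N then 1 else Q a (hs u (- dd a)) / Q a (hs u (dd a)).

Definition z (a : nat) (u : CC) : F :=
  Y a (hs u a%:Z) / Y a.-1 (hs u (a.+1)%:Z).

Definition zbar (a : nat) (u : CC) : F :=
  Y a.-1 (hs u ((2 * n + 3)%:Z - a%:Z)) / Y a (hs u ((2 * n + 4)%:Z - a%:Z)).

Definition xmid (u : CC) : F :=
  Q n (hs u n%:Z) * Q n (hs u (n + 4)%:Z) / Q n (hs u (n + 2)%:Z) ^+ 2.

(* x_i for 1 <= i <= N (value 0 outside this range, never used) *)
Definition x (i : nat) (u : CC) : F :=
  if (1 <= i <= n)%N then z i u
  else if i == n.+1 then xmid u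
  else if i == n.+2 then - xmid u
  else if (n + 3 <= i <= NN)%N then zbar (2 * n + 3 - i) u
  else 0.

Definition eps (i : nat) : F := if (i == n.+1) || (i == n.+2) then -1 else 1.

(* action of the factor (D - eps_i x_i(u+n+1-i)) on w : C -> F *)
Definition factor (i : nat) (w : CC -> F) : CC -> F :=
  fun u => w (ish u 1) - eps i * x i (ish u ((n + 1)%:Z - i%:Z)) * w u.

(* L_j = prod_{i=N+1-j}^{N} (D - eps_i x_i(u+n+1-i)), increasing i left to right;
   the rightmost factor acts first. *)
Definition Lop (j : nat) (w : CC -> F) : CC -> F :=
  foldr factor w (iota (NN + 1 - j) j).

End Defs.

(* Casorati determinant [i_1,...,i_m] built from w_1,...,w_m (w indexed from 1). *)
Definition casorati (F : fieldType) (w : nat -> CC -> F) (s : seq nat) (u : CC) : F :=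
  \det (\matrix_(r < size s, c < size s) w r.+1 (ish u (nth 0%N s c)%:Z)).

Definition xtilde (F : fieldType) (w : nat -> CC -> F) (m : nat) (u : CC) : F :=
  casorati w (iota 0 m) u * casorati w (iota 2 m.-1) u
  / (casorati w (iota 1 m) u * casorati w (iota 1 m.-1) u).

From HB Require Import structures.
From mathcomp Require Import all_boot all_order all_algebra.
From mathcomp Require Import complex Rstruct.
From mathcomp Require Import mpoly.
From mathcomp Require Import zify ring.
Import GRing.Theory Num.Theory.
Local Open Scope ring_scope.

(* Column operations with the coefficients of the factorised operators L_r turn
   the Casorati matrix [0, ..., j-1] of w_1, ..., w_j into a triangular one: its
   determinant is the product of the g_r = L_r w_(r+1), r < j, since the longer
   L_s annihilate w_(r+1).  As L_(r+1) w_(r+1) = 0, the shift u -> u+1 multiplies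
   g_r by the coefficient b_r of the outermost factor of L_(r+1), so x~_(k+1)
   telescopes to (prod_(r<k) b_r(u+1) / b_r(u)) / b_k(u).  The x_m obey the same
   recursion x_1 b_0 = 1, x_(m+1)(u) b_m(u) = x_m(u) b_(m-1)(u+1): an identity
   between ratios of Q's, checked separately in the ranges of z, of the two middle
   terms and of zbar, and using only that the Q's do not vanish. *)

Lemma ishA (u : CC) (j k : int) : ish (ish u j) k = ish u (j + k).
Proof. by rewrite /ish intrD addrA. Qed.

Lemma ish0 (u : CC) : ish u 0 = u.
Proof. by rewrite /ish mulr0z addr0. Qed.

Lemma hsA (u : CC) (j k : int) : hs (hs u j) k = hs u (j + k).
Proof. by rewrite /hs intrD mulrDl addrA. Qed.

Lemma ish_hs (u : CC) (k : int) : ish u k = hs u (k * 2).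
Proof.
by rewrite /hs /ish intrM -mulrA divff ?mulr1 // pnatr_eq0.
Qed.

Section DifferenceOperator.
Variable F : fieldType.
Variable b : nat -> CC -> F.

Fixpoint diff_op (s : nat) (w : CC -> F) : CC -> F :=
  if s is s'.+1 then fun u => diff_op s' w (ish u 1) - b s' u * diff_op s' w u
  else w.

(* [diff_coef s u t] is the coefficient of [D^t] in [diff_op s]. *)
Fixpoint diff_coef (s : nat) (u : CC) (t : nat) : F :=
  if s is s'.+1 then
    (if t is t'.+1 then diff_coef s' (ish u 1) t' else 0) - b s' u * diff_coef s' u t
  else (t == 0)%:R.

Lemma diff_opE s u w K : (s < K)%N ->
  diff_op s w u = \sum_(t < K) diff_coef s u t * w (ish u t).
Proof.
elim: s u w K => [|s IH] u w [|K] // ltsK /=.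
  by rewrite big_ord_recl /= ish0 mul1r big1 ?addr0 // => i _; rewrite mul0r.
rewrite (IH _ _ K) // (IH _ _ K.+1) ?(ltnW ltsK) //.
under eq_bigr => i _ do rewrite mulrBl.
rewrite sumrB mulr_sumr; congr (_ - _); last by apply: eq_bigr => i _; rewrite mulrA.
by rewrite big_ord_recl /= mul0r add0r; apply: eq_bigr => i _; rewrite ishA.
Qed.

Lemma diff_coef_gt s u t : (s < t)%N -> diff_coef s u t = 0.
Proof.
elim: s u t => [|s IH] u [|t] //= ltst.
by rewrite !IH ?mulr0 ?subr0 //; lia.
Qed.

Lemma diff_coef_diag s u : diff_coef s u s = 1.
Proof.
elim: s u => [|s IH] u //=.
by rewrite IH diff_coef_gt // mulr0 subr0.
Qed.

Lemma det_shift_mx_triangular (w : nat -> CC -> F) j u :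
  (forall (r s : nat) v, (r < s < j)%N -> diff_op s (w r.+1) v = 0) ->
  \det (\matrix_(r < j, c < j) w r.+1 (ish u (c : nat)%:Z)) =
  \prod_(r < j) diff_op r (w r.+1) u.
Proof.
move=> w_ker.
set M := \matrix_(r < j, c < j) _.
pose C := \matrix_(t < j, s < j) diff_coef s u t.
pose G := \matrix_(r < j, s < j) diff_op s (w r.+1) u.
have MC : M *m C = G.
  apply/matrixP => r s; rewrite !mxE (@diff_opE _ _ _ _ (ltn_ord s)).
  by apply: eq_bigr => t _; rewrite !mxE mulrC.
have detC : \det C = 1.
  rewrite -det_tr det_trig; last first.
    by apply/is_trig_mxP => i k ltik; rewrite !mxE diff_coef_gt.
  by rewrite big1 // => i _; rewrite !mxE diff_coef_diag.
have := det_mulmx M C; rewrite MC detC mulr1 => <-.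
rewrite det_trig; last first.
  by apply/is_trig_mxP => i k ltik; rewrite !mxE w_ker // ltik ltn_ord.
by apply: eq_bigr => i _; rewrite mxE.
Qed.

End DifferenceOperator.

Arguments diff_op {F}.

Lemma casorati_iota (F : fieldType) (w : nat -> CC -> F) k m u :
  casorati w (iota k m) u =
  \det (\matrix_(r < m, c < m) w r.+1 (ish (ish u k%:Z) (c : nat)%:Z)).
Proof.
rewrite /casorati; move: (size_iota k m) (nth 0%N (iota k m)) (@nth_iota 0%N k m).
move=> -> nth_km nth_kmE; congr (\det _); apply/matrixP => r c; rewrite !mxE.
by rewrite nth_kmE // ishA; congr (w _ (ish u _)); lia.
Qed.

Section CasoratiFactorization.
Variables (F : fieldType) (b w : nat -> CC -> F) (N : nat).
Hypothesis w_ker : forall m j : nat, (1 <= m)%N -> (m <= j)%N -> (j <= N)%N ->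
  forall u, diff_op b j (w m) u = 0.
Hypothesis casorati_neq0 : forall j : nat, (1 <= j <= N)%N ->
  forall u, casorati w (iota 0 j) u != 0.

Let g r := diff_op b r (w r.+1).

Lemma casorati_iota_prod k j v : (j <= N)%N ->
  casorati w (iota k j) v = \prod_(r < j) g r (ish v k%:Z).
Proof.
move=> lejN; rewrite casorati_iota (@det_shift_mx_triangular _ b) // => r s v' /andP[ltrs ltsj].
by apply: w_ker; lia.
Qed.

Lemma g_shift r v : (r < N)%N -> g r (ish v 1) = b r v * g r v.
Proof. by move=> ltrN; apply/eqP; rewrite -subr_eq0; apply/eqP/(w_ker r.+1 r.+1). Qed.

Lemma g_neq0 r v : (r < N)%N -> g r v != 0.
Proof.
move=> ltrN; have := casorati_neq0 r.+1 _ v; rewrite casorati_iota_prod ?ish0 //.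
by rewrite big_ord_recr /= mulf_eq0 negb_or => /(_ ltrN) /andP[].
Qed.

Lemma diff_op_coef_neq0 r v : (r < N)%N -> b r v != 0.
Proof.
move=> ltrN; have := g_neq0 r (ish v 1) ltrN; rewrite g_shift //.
by rewrite mulf_eq0 negb_or => /andP[].
Qed.

(* The Casorati quotient telescopes: [g_r(u+2) g_r(u) / g_r(u+1)^2 = b_r(u+1) / b_r(u)]. *)
Lemma xtilde_prod k u : (k < N)%N ->
  xtilde w k.+1 u = (\prod_(r < k) (b r (ish u 1) / b r u)) / b k u.
Proof.
move=> ltkN; have lekN := ltnW ltkN.
rewrite /xtilde [k.+1.-1]/= !casorati_iota_prod //.
have gshift2 j v : (j <= k.+1)%N ->
    \prod_(r < j) g r (ish v 1) = \prod_(r < j) (b r v * g r v).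
  by move=> lejk; apply: eq_bigr => r _; rewrite g_shift //; have := ltn_ord r; lia.
rewrite (_ : 2%:Z = 1 + 1) // -ishA ish0 !gshift2 // big_split /= gshift2 //.
rewrite prodf_div !big_split !big_ord_recr /=.
have nzb : \prod_(r < k) b r u != 0.
  by apply/prodf_neq0 => r _; apply: diff_op_coef_neq0; have := ltn_ord r; lia.
have nzg : \prod_(r < k) g r u != 0.
  by apply/prodf_neq0 => r _; apply: g_neq0; have := ltn_ord r; lia.
by field; rewrite nzb nzg g_neq0 // diff_op_coef_neq0.
Qed.

End CasoratiFactorization.

Lemma recurrence_prodE (F : fieldType) (b a : nat -> CC -> F) N :
  (forall r v, (r < N)%N -> b r v != 0) ->
  (forall u, a 1%N u * b 0%N u = 1) ->
  (forall m u, (1 <= m)%N -> (m < N)%N -> a m.+1 u * b m u = a m u * b m.-1 (ish u 1)) ->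
  forall k u, (k < N)%N -> a k.+1 u = (\prod_(r < k) (b r (ish u 1) / b r u)) / b k u.
Proof.
move=> b_neq0 a1 a_rec; elim=> [|k IH] u ltkN.
  by rewrite big_ord0 -(a1 u) mulfK ?b_neq0.
have ltkN' : (k < N)%N by lia.
have -> : a k.+2 u = a k.+1 u * b k (ish u 1) / b k.+1 u.
  by rewrite -a_rec // mulfK ?b_neq0.
by rewrite IH // big_ord_recr /=; field; rewrite !b_neq0.
Qed.

Lemma alg_indep_neq0 n (F : fieldType) (Q : nat -> CC -> F) :
  alg_indep n Q -> forall a v, (1 <= a <= n)%N -> Q a v != 0.
Proof.
move=> indepQ a v lean.
have inj : injective (fun _ : 'I_1 => (a, v)) by move=> i j _; rewrite !ord1.
have X_neq0 : ('X_(ord0 : 'I_1) : {mpoly int[1]}) != 0.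
  by apply/eqP => X0; have := @mcoeffXU 1%N int ord0 ord0; rewrite X0 mcoeff0 eqxx.
have := indepQ 1%N (fun _ => (a, v)) inj (fun _ => lean) _ X_neq0.
by rewrite map_mpolyX mevalXU.
Qed.

(* Makes the shifts [hs u k] that are equal as integers syntactically equal, so that
   [field] treats them as the same atom. *)
Ltac unify_hs :=
  repeat match goal with
  | |- context [?f ?a (hs ?u ?k1)] =>
    match goal with
    | |- context [f a (hs u ?k2)] =>
      assert_fails (constr_eq k1 k2);
      let e := fresh in
      assert (e : f a (hs u k1) = f a (hs u k2)) by (congr (f a (hs u _)); lia);
      rewrite e; clear e
    end
  end.

Section XRecurrence.
Variables (F : fieldType) (n : nat) (Q : nat -> CC -> F).

(* The coefficient of the [s.+1]-st factor of [L_j] counted from the right, i.e. of the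
   factor with index [i = N - s]. *)
Definition Lcoef (s : nat) (u : CC) : F :=
  eps F n (NN n - s) * x n Q (NN n - s) (ish u ((n + 1)%:Z - (NN n - s)%:Z)).

Lemma Lop_diff_op j w v : (j <= NN n)%N -> Lop n Q j w v = diff_op Lcoef j w v.
Proof.
elim: j w v => [|j IH] w v lejN //.
rewrite /Lop (_ : (NN n + 1 - j.+1 = NN n - j)%N) /=; last lia.
rewrite /factor (_ : ((NN n - j).+1 = NN n + 1 - j)%N); last lia.
by rewrite -/(Lop n Q j w) !IH //; lia.
Qed.

Hypothesis n_ge2 : (2 <= n)%N.
Hypothesis Q_neq0 : forall a v, (1 <= a <= n)%N -> Q a v != 0.

Lemma Y_neq0 a v : (a <= n)%N -> Y n Q a v != 0.
Proof.
rewrite /Y; have [->|a_neq0 lean] := eqVneq a 0%N; first by rewrite oner_neq0.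
by rewrite mulf_neq0 // ?invr_eq0 Q_neq0 // lt0n a_neq0.
Qed.

Lemma Y_nE v : Y n Q n v = Q n (hs v (-2)) / Q n (hs v 2).
Proof. by rewrite /Y /dd eqxx; case: eqP => //; lia. Qed.

Lemma x_z i u : (1 <= i <= n)%N -> x n Q i u = z n Q i u.
Proof. by rewrite /x => ->. Qed.

Lemma x_n1 u : x n Q n.+1 u = xmid n Q u.
Proof. by rewrite /x ltnn andbF eqxx. Qed.

Lemma x_n2 u : x n Q n.+2 u = - xmid n Q u.
Proof. by rewrite /x; case: ifP => [/andP[]|_]; [lia|case: eqP => [|_]; [lia|rewrite eqxx]]. Qed.

Lemma x_zbar i u : (n + 3 <= i <= NN n)%N -> x n Q i u = zbar n Q (2 * n + 3 - i) u.
Proof.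
move=> hi; rewrite /x; case: ifP => [/andP[]|_]; first lia.
by case: eqP => [|_]; [lia|case: eqP => [|_]; [lia|rewrite hi]].
Qed.

Lemma eps_1 i : i != n.+1 -> i != n.+2 -> eps F n i = 1.
Proof. by rewrite /eps => /negbTE -> /negbTE ->. Qed.

Lemma Lcoef_zbar s u : (s < n)%N -> Lcoef s u = zbar n Q s.+1 (ish u (s%:Z - n%:Z - 1)).
Proof.
move=> ltsn; rewrite /Lcoef eps_1 ?mul1r; try (apply/eqP; rewrite /NN; lia).
rewrite x_zbar; last by rewrite /NN; lia.
rewrite (_ : (2 * n + 3 - (NN n - s) = s.+1)%N); last by rewrite /NN; lia.
by congr (zbar _ _ _ (ish u _)); rewrite /NN; lia.
Qed.

Lemma Lcoef_n u : Lcoef n u = xmid n Q (ish u (-1)).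
Proof.
rewrite /Lcoef /eps (_ : (NN n - n = n.+2)%N); last by rewrite /NN; lia.
by rewrite eqxx orbT x_n2 mulrN mulN1r opprK; congr (xmid _ _ (ish u _)); lia.
Qed.

Lemma Lcoef_n1 u : Lcoef n.+1 u = - xmid n Q u.
Proof.
rewrite /Lcoef /eps (_ : (NN n - n.+1 = n.+1)%N); last by rewrite /NN; lia.
by rewrite eqxx x_n1 mulN1r (_ : (n + 1)%:Z - n.+1%:Z = 0) ?ish0 //; lia.
Qed.

Lemma Lcoef_z i u : (1 <= i <= n)%N ->
  Lcoef (NN n - i) u = z n Q i (ish u (n%:Z + 1 - i%:Z)).
Proof.
move=> hi; rewrite /Lcoef eps_1 ?mul1r; try (apply/eqP; rewrite /NN; lia).
rewrite (_ : (NN n - (NN n - i) = i)%N); last by rewrite /NN; lia.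
by rewrite x_z //; congr (z _ _ _ (ish u _)); lia.
Qed.

Lemma x_rec_first u : x n Q 1 u * Lcoef 0 u = 1.
Proof.
rewrite x_z ?Lcoef_zbar; try lia.
rewrite /z /zbar /= !ish_hs !hsA (_ : Y n Q 0 = fun=> 1) //; unify_hs.
by field; rewrite Y_neq0 ?oner_neq0 //; lia.
Qed.

Lemma x_rec_z a u : (a.+2 <= n)%N ->
  x n Q a.+2 u * Lcoef a.+1 u = x n Q a.+1 u * Lcoef a (ish u 1).
Proof.
move=> lean; rewrite !x_z ?Lcoef_zbar; try lia.
rewrite /z /zbar /= !ish_hs !hsA; unify_hs.
by field; rewrite !Y_neq0 //; lia.
Qed.

Lemma x_rec_n u : x n Q n.+1 u * Lcoef n u = x n Q n u * Lcoef n.-1 (ish u 1).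
Proof.
rewrite x_n1 Lcoef_n x_z ?Lcoef_zbar ?prednK; try lia.
rewrite /z /zbar /xmid !ish_hs !hsA !Y_nE !hsA; unify_hs.
by field; rewrite ?Y_neq0 ?Q_neq0 //; lia.
Qed.

Lemma x_rec_n1 u : x n Q n.+2 u * Lcoef n.+1 u = x n Q n.+1 u * Lcoef n (ish u 1).
Proof. by rewrite x_n2 x_n1 Lcoef_n1 Lcoef_n ishA addrN ish0 mulrNN. Qed.

Lemma x_rec_n2 u : x n Q n.+3 u * Lcoef n.+2 u = x n Q n.+2 u * Lcoef n.+1 (ish u 1).
Proof.
rewrite x_zbar /NN; try lia.
rewrite (_ : n.+2 = NN n - n)%N ?Lcoef_z; try (rewrite /NN; lia).
rewrite (_ : (NN n - n = n.+2)%N) ?x_n2 ?Lcoef_n1 ?mulrNN; last by rewrite /NN; lia.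
rewrite (_ : (2 * n + 3 - n.+3 = n)%N); last lia.
rewrite /z /zbar /xmid !ish_hs !hsA !Y_nE !hsA; unify_hs.
by field; rewrite ?Y_neq0 ?Q_neq0 //; lia.
Qed.

Lemma x_rec_zbar a u : (1 <= a < n)%N ->
  x n Q (NN n - a).+1 u * Lcoef (NN n - a) u = x n Q (NN n - a) u * Lcoef (NN n - a.+1) (ish u 1).
Proof.
move=> ha; rewrite !x_zbar ?Lcoef_z; try (rewrite /NN; lia).
rewrite (_ : (2 * n + 3 - (NN n - a).+1 = a)%N); last by rewrite /NN; lia.
rewrite (_ : (2 * n + 3 - (NN n - a) = a.+1)%N); last by rewrite /NN; lia.
rewrite /z /zbar /= !ish_hs !hsA; unify_hs.
by field; rewrite ?Y_neq0 ?Q_neq0 //; lia.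
Qed.

Lemma x_rec m u : (1 <= m < NN n)%N ->
  x n Q m.+1 u * Lcoef m u = x n Q m u * Lcoef m.-1 (ish u 1).
Proof.
move=> hm; case: (ltnP m n) => [ltmn|lenm].
  by case: m hm ltmn => // a _; apply: x_rec_z.
case: (ltnP m n.+3) => [ltmn3|len3m].
  have : [|| m == n, m == n.+1 | m == n.+2] by lia.
  by case/or3P => /eqP ->; [apply: x_rec_n|apply: x_rec_n1|apply: x_rec_n2].
have {hm} [a -> ha] : exists2 a, m = (NN n - a)%N & (1 <= a < n)%N.
  by exists (NN n - m)%N; rewrite /NN in hm *; lia.
by rewrite (_ : (NN n - a).-1 = NN n - a.+1)%N; [apply: x_rec_zbar | rewrite /NN; lia].
Qed.

End XRecurrence.

Theorem mainTheorem17 (n : nat) (F : fieldType) (Q : nat -> CC -> F)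
  (w : nat -> CC -> F) :
  (2 <= n)%N ->
  alg_indep n Q ->
  (forall m j : nat, (1 <= m)%N -> (m <= j)%N -> (j <= NN n)%N ->
     forall u : CC, Lop n Q j (w m) u = 0) ->
  (forall j : nat, (1 <= j <= NN n)%N ->
     forall u : CC, casorati w (iota 0 j) u != 0) ->
  forall m : nat, (1 <= m <= NN n)%N ->
    forall u : CC, xtilde w m u = x n Q m u.
Proof.
move=> n_ge2 /alg_indep_neq0 Q_neq0 L_ker casorati_neq0 [//|k] /andP[_ ltkN] u.
have w_ker m j : (1 <= m)%N -> (m <= j)%N -> (j <= NN n)%N ->
    forall v, diff_op (Lcoef F n Q) j (w m) v = 0.
  by move=> *; rewrite -Lop_diff_op // L_ker.
rewrite (@xtilde_prod _ _ _ _ w_ker casorati_neq0) //; symmetry.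
apply: (@recurrence_prodE _ _ (x n Q) _ (@diff_op_coef_neq0 _ _ _ _ w_ker casorati_neq0) _ _ _ _ ltkN).
  exact: x_rec_first.
by move=> m v hm1 hmN; apply: x_rec => //; rewrite hm1.
Qed.
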